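(* Let $L$ be a Noetherian $\Sigma$-pseudofield such that $L^\sigma$ is a $\Sigma_1$-closed pseudofield. Then there exist a field $F$ and $n\ge1$ such that $L\cong\prod_{i=1}^nF_{\Sigma_1}(F)$ as $\Sigma_1$-rings.
   Context: All rings are commutative with $1$. Fix $\Sigma_0=\mathbb Z$ with generator $\sigma$, a finite abelian group $\Sigma_1=\mathbb Z/t_1\mathbb Z\oplus\dots\oplus\mathbb Z/t_s\mathbb Z$ ($t_i\ge2$), and $\Sigma=\Sigma_0\oplus\Sigma_1$. For a subgroup $\Sigma'\subseteq\Sigma$, a $\Sigma'$-ring is a ring with an action of $\Sigma'$ by ring automorphisms; $\Sigma'$-ideals are $\Sigma'$-stable ideals; $L^\sigma$ is the ring of $\sigma$-invariants. A $\Sigma'$-ring is $\Sigma'$-simple if its only $\Sigma'$-ideals are $0$ and itself ($\neq0$). A ring is absolutely flat if every module over it is flat. A $\Sigma'$-pseudofield is an absolutely flat $\Sigma'$-simple ring; Noetherian if it is a Noetherian ring. A $\Sigma_1$-pseudofield $C$ is $\Sigma_1$-closed if $\sqrt I=\mathbb I(\mathbb V(I))$ for every $n$ and every $\Sigma_1$-ideal $I$ of $C\{y_1,\dots,y_n\}_{\Sigma_1}$ (polynomial ring in indeterminates $\tau y_i$, $\tau\in\Sigma_1$), with $\mathbb V$ the common zero set in $C^n$ and $\mathbb I$ the ideal of vanishing polynomials. For a ring $F$, $F_{\Sigma_1}(F)=\{f:\Sigma_1\to F\}$ with componentwise ring operations and $\Sigma_1$-action $(\mu f)(\tau)=f(\mu^{-1}\tau)$.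 *)

From HB Require Import structures.
From mathcomp Require Import all_boot all_order all_algebra.
From mathcomp Require Import mpoly.
Set Implicit Arguments. Unset Strict Implicit. Unset Printing Implicit Defensive.
Import Order.TTheory GRing.Theory Num.Theory.
Local Open Scope ring_scope.

Definition is_ring_action (A : zmodType) (L : comNzRingType) (act : A -> L -> L) :=
  [/\ forall a x y, act a (x + y) = act a x + act a y,
      forall a x y, act a (x * y) = act a x * act a y,
      forall a, act a 1 = 1,
      forall x, act 0 x = x &
      forall a b x, act (a + b) x = act a (act b x)].

Definition is_ideal (L : comNzRingType) (I : L -> Prop) :=
  [/\ I 0, forall x y, I x -> I y -> I (x + y) & forall a x, I x -> I (a * x)].

Definition is_act_ideal (A : zmodType) (L : comNzRingType) (act : A -> L -> L)
  (I : L -> Prop) :=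
  is_ideal I /\ forall a x, I x -> I (act a x).

Definition act_simple (A : zmodType) (L : comNzRingType) (act : A -> L -> L) :=
  (1 : L) != 0 /\
  forall I, is_act_ideal act I -> (forall x, I x <-> x = 0) \/ (forall x, I x).

Definition noetherian_ring (L : comNzRingType) :=
  forall I : L -> Prop, is_ideal I ->
    exists s : seq L, forall x,
      I x <-> exists c : 'I_(size s) -> L, x = \sum_(i < size s) c i * s`_i.

(* Flat module, via the equational criterion of flatness (no tensor products
   are available in the library). *)
Definition flat_module (L : comNzRingType) (M : lmodType L) :=
  forall (k : nat) (a : 'I_k -> L) (m : 'I_k -> M),
    \sum_(i < k) a i *: m i = 0 ->
    exists (l : nat) (b : 'I_k -> 'I_l -> L) (m' : 'I_l -> M),
      (forall i, m i = \sum_(j < l) b i j *: m' j) /\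
      (forall j, \sum_(i < k) a i * b i j = 0).

Definition absolutely_flat (L : comNzRingType) :=
  forall M : lmodType L, flat_module M.

Definition act_pseudofield (A : zmodType) (L : comNzRingType) (act : A -> L -> L) :=
  absolutely_flat L /\ act_simple act.

Section Closed.
Variables (G : finZmodType) (C : comNzRingType) (actC : G -> C -> C) (n : nat).

(* the difference polynomial ring C{y_1..y_n}_G : polynomials in the
   indeterminates tau y_i (i < n, tau in G); the indeterminate tau y_i is
   'X_(dvar (i, tau)). *)
Definition dvar (p : 'I_n * G) : 'I_#|{: 'I_n * G}| := enum_rank p.
Definition dpoly := {mpoly C[#|{: 'I_n * G}|]}.

Definition dpoly_act (mu : G) (p : dpoly) : dpoly :=
  mmap (fun c => (actC mu c)%:MP)
       (fun j => 'X_(dvar ((enum_val j).1, mu + (enum_val j).2))) p.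

Definition dpoly_eval (p : dpoly) (a : 'I_n -> C) : C :=
  p.@[fun j => actC (enum_val j).2 (a (enum_val j).1)].

Definition zero_set (I : dpoly -> Prop) : ('I_n -> C) -> Prop :=
  fun a => forall p, I p -> dpoly_eval p a = 0.

Definition vanishing_ideal (V : ('I_n -> C) -> Prop) : dpoly -> Prop :=
  fun p => forall a, V a -> dpoly_eval p a = 0.

Definition radical (I : dpoly -> Prop) : dpoly -> Prop :=
  fun p => exists k : nat, I (p ^+ k).
End Closed.

Definition act_closed (G : finZmodType) (C : comNzRingType) (actC : G -> C -> C) :=
  forall (n : nat) (I : dpoly G C n -> Prop),
    is_act_ideal (@dpoly_act G C actC n) I ->
    forall p, radical I p <-> vanishing_ideal actC (zero_set actC I) p.

(* "L^sigma is a Sigma_1-closed (Sigma_1-)pseudofield": some ring C with a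
   G-action, isomorphic (G-equivariantly) to the ring of sigma-invariants
   of L (sigma = action of (1,0)), equipped with the restricted G-action, is a
   Sigma_1-closed Sigma_1-pseudofield. *)
Definition invariants_closed_pseudofield (G : finZmodType) (L : comNzRingType)
  (act : (int * G)%type -> L -> L) :=
  exists (C : comNzRingType) (actC : G -> C -> C) (iota : C -> L),
    [/\ is_ring_action actC,
        [/\ forall x y, iota (x + y) = iota x + iota y,
            forall x y, iota (x * y) = iota x * iota y,
            iota 1 = 1 & injective iota],
        forall y : L, (exists c, iota c = y) <-> act (1%:Z, 0) y = y,
        forall mu c, iota (actC mu c) = act (0, mu) (iota c) &
        act_pseudofield actC /\ act_closed actC].

From HB Require Import structures.
From mathcomp Require Import all_boot all_order all_algebra.
From mathcomp Require Import mpoly ring_quotient generic_quotient.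
From Stdlib Require Import ClassicalEpsilon FunctionalExtensionality.
Import GRing.Theory.
Local Open Scope ring_scope.
Set Implicit Arguments. Unset Strict Implicit. Unset Printing Implicit Defensive.

(* Absolute flatness makes L von Neumann regular and Noetherianity provides a
   primitive idempotent e, so that F := L / Ann(e), a copy of the corner Le, is a
   field.  By Sigma-simplicity the Sigma-orbit of e generates the unit ideal;
   distinct primitive idempotents are orthogonal, hence the orbit is finite with
   sum 1 and L is the product of the corresponding corners, each isomorphic to F.
   Closedness of L^sigma is what makes Sigma_1 act freely on primitive
   idempotents: if H <> 0 fixes u, the Sigma_1-ideal of one-variable difference
   polynomials vanishing at the indicator functions of all transversals of H is
   proper, so by the Nullstellensatz it has a zero b in L^sigma; then b is an
   idempotent whose H-translates are orthogonal and sum to 1, and b u can be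
   neither 0 nor u.  Choosing representatives of the free Sigma_1-orbits in the
   orbit of e yields L = prod_i F_Sigma_1(F). *)

Section Idempotents.
Variable L : comNzRingType.

Definition primitive_idem (e : L) :=
  [/\ e * e = e, e != 0 & forall f, f * f = f -> f * e = f -> f = 0 \/ f = e].

Lemma primitive_idemM e a :
  primitive_idem e -> a * a = a -> a * e = 0 \/ a * e = e.
Proof.
case=> ee _ e_min aa; apply: e_min; last by rewrite -mulrA ee.
by rewrite mulrACA aa ee.
Qed.

Lemma primitive_idem_orth e e' :
  primitive_idem e -> primitive_idem e' -> e * e' = 0 \/ e = e'.
Proof.
move=> pe pe'; have [ee _ _] := pe; have [e'e' _ _] := pe'.
case: (primitive_idemM pe' ee) => [|ee']; first by left.
case: (primitive_idemM pe e'e') => [e'e|e'e]; first by left; rewrite mulrC.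
by right; rewrite -e'e mulrC ee'.
Qed.

Definition von_neumann_regular := forall a : L, exists y, a = a * a * y.

Lemma regular_primitive_idem_unit e : von_neumann_regular -> primitive_idem e ->
  forall x, x * e = 0 \/ exists y, x * e * y = e.
Proof.
move=> regL [ee _ e_min] x; have [y xey] := regL (x * e).
have idem_xey : x * e * y * (x * e * y) = x * e * y.
  by rewrite mulrACA mulrA -xey.
have : x * e * y * e = x * e * y by rewrite mulrAC -[x * e * e]mulrA ee.
case/(e_min _ idem_xey) => [xey0|]; last by right; exists y.
by left; rewrite xey -mulrA xey0 mulr0.
Qed.

End Idempotents.

Section PrincipalQuotient.
Local Open Scope quotient_scope.
Variables (L : comNzRingType) (a : L).
Hypothesis a_nonunit : ~ exists z, a * z = 1.

Definition principal_pred : {pred L} :=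
  fun x => if excluded_middle_informative (exists z, x = a * z) then true else false.

Lemma principal_predP x : reflect (exists z, x = a * z) (principal_pred x).
Proof. by rewrite /principal_pred; case: excluded_middle_informative; constructor. Qed.

Lemma principal_pred_closed : idealr_closed principal_pred.
Proof.
split.
- by apply/principal_predP; exists 0; rewrite mulr0.
- by apply/principal_predP => -[z az1]; apply: a_nonunit; exists z.
- move=> b u v /principal_predP[z ->] /principal_predP[w ->].
  by apply/principal_predP; exists (b * z + w); rewrite mulrDr mulrCA.
Qed.

HB.instance Definition _ := isIdealr.Build L principal_pred principal_pred_closed.

Definition quot := {ideal_quot principal_pred}.
Definition quot_mod := quot.
HB.instance Definition _ := GRing.Zmodule.on quot_mod.

Definition quot_scale (b : L) (q : quot_mod) : quot_mod := (\pi_quot b * (q : quot) : quot).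
Lemma quot_scaleA b c q : quot_scale b (quot_scale c q) = quot_scale (b * c) q.
Proof. by rewrite /quot_scale rmorphM mulrA. Qed.
Lemma quot_scale1 : left_id 1 quot_scale.
Proof. by move=> q; rewrite /quot_scale rmorph1 mul1r. Qed.
Lemma quot_scaleDr : right_distributive quot_scale +%R.
Proof. by move=> b u v; rewrite /quot_scale mulrDr. Qed.
Lemma quot_scaleDl q : {morph quot_scale^~ q : b c / b + c}.
Proof. by move=> b c; rewrite /quot_scale rmorphD mulrDl. Qed.
HB.instance Definition _ :=
  GRing.Zmodule_isLmodule.Build L quot_mod quot_scaleA quot_scale1 quot_scaleDr quot_scaleDl.

(* Flatness applied to the relation [a *: 1 = 0] in [L / aL]. *)
Lemma flat_quot_regular : flat_module quot_mod -> exists y, a = a * a * y.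
Proof.
move=> flatQ.
have rel : \sum_(i < 1) a *: ((1 : quot) : quot_mod) = 0.
  rewrite big_ord1 /GRing.scale /= /quot_scale mulr1 -(rmorph0 (\pi_quot : {rmorphism L -> quot})).
  by apply/eqP; rewrite -Quotient.idealrBE subr0; apply/principal_predP; exists 1; rewrite mulr1.
have [l [b [m [one_eq b_ann]]]] := flatQ 1%N (fun=> a) (fun=> (1 : quot) : quot_mod) rel.
have : \pi_quot (\sum_(j < l) b ord0 j * repr (m j : quot)) = 1 :> quot.
  rewrite (one_eq ord0) /GRing.scale /= /quot_scale rmorph_sum.
  by apply: eq_bigr => j _; rewrite rmorphM; congr (_ * _); exact: reprK.
move/eqP; rewrite -(rmorph1 (\pi_quot : {rmorphism L -> quot})) -Quotient.idealrBE.
case/principal_predP => z sum_eq; exists (- z).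
have a_sum : a * \sum_(j < l) b ord0 j * repr (m j : quot) = 0.
  rewrite mulr_sumr big1 // => j _.
  by rewrite mulrA; have := b_ann j; rewrite big_ord1 => ->; rewrite mul0r.
have := congr1 (GRing.mul a) sum_eq.
by rewrite mulrBr a_sum mulr1 sub0r mulrN mulrA => /eqP; rewrite eqr_oppLR => /eqP.
Qed.

End PrincipalQuotient.

Lemma absolutely_flat_regular (L : comNzRingType) :
  absolutely_flat L -> von_neumann_regular L.
Proof.
move=> flatL a; case: (classic (exists z, a * z = 1)) => [[z az1]|a_nonunit].
  by exists z; rewrite -mulrA az1 mulr1.
exact: flat_quot_regular (flatL (quot_mod a_nonunit)).
Qed.

Section Ideals.
Variable L : comNzRingType.

Lemma principal_is_ideal (a : L) : is_ideal (fun x => exists z, x = a * z).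
Proof.
split.
- by exists 0; rewrite mulr0.
- by move=> _ _ [z ->] [w ->]; exists (z + w); rewrite mulrDr.
- by move=> b _ [z ->]; exists (b * z); rewrite mulrCA.
Qed.

Lemma ideal_lincomb (I : L -> Prop) n (c s : 'I_n -> L) :
  is_ideal I -> (forall i, I (s i)) -> I (\sum_i c i * s i).
Proof. by case=> I0 ID IM Is; apply: big_ind => // i _; apply: IM. Qed.

End Ideals.

Lemma noetherian_acc (L : comNzRingType) (I : nat -> L -> Prop) :
  noetherian_ring L -> (forall k, is_ideal (I k)) ->
  (forall k x, I k x -> I k.+1 x) -> exists K, forall x, I K.+1 x -> I K x.
Proof.
move=> noethL idealI incrI.
have monoI k m x : (k <= m)%N -> I k x -> I m x.
  move/subnKC <-; elim: (m - k)%N => [|d IHd] Ix; first by rewrite addn0.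
  by rewrite addnS; apply/incrI/IHd.
pose U x := exists k, I k x.
have idealU : is_ideal U.
  split.
  - by exists 0%N; case: (idealI 0%N).
  - move=> x y [k Ix] [m Iy]; exists (maxn k m); case: (idealI (maxn k m)) => _ ID _.
    by apply: ID; [apply: monoI Ix; apply: leq_maxl | apply: monoI Iy; apply: leq_maxr].
  - by move=> b x [k Ix]; exists k; case: (idealI k) => _ _; apply.
have [s genU] := noethL U idealU.
have gen_in_U (i : 'I_(size s)) : U s`_i.
  apply/genU; exists (fun j => (j == i)%:R).
  rewrite (bigD1 i) //= eqxx mul1r big1 ?addr0 // => j /negPf ->.
  by rewrite mul0r.
have [k Is] := fin_all_exists gen_in_U.
exists (\max_i k i) => x IKx; have [c ->] := (genU x).1 (ex_intro _ _ IKx).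
by apply: ideal_lincomb => // i; apply: monoI (Is i); apply: leq_bigmax.
Qed.

(* A strictly decreasing chain of idempotents [f k] gives the strictly increasing
   chain of ideals [(1 - f k) L]. *)
Lemma noetherian_primitive_idem (L : comNzRingType) :
  noetherian_ring L -> exists e : L, primitive_idem e.
Proof.
move=> noethL; apply: NNPP => no_prim.
pose proper_sub (e f : L) := [&& f * f == f, f * e == f, f != 0 & f != e].
have [next next_sub] : exists next : L -> L,
    forall e, e * e = e -> e != 0 -> proper_sub e (next e).
  have ex_sub e : exists f, (e * e == e) && (e != 0) ==> proper_sub e f.
    case: (boolP ((e * e == e) && (e != 0))) => [/andP[/eqP ee e0]|_]; last by exists 0.
    apply: NNPP => no_sub; apply: no_prim; exists e; split=> // f ff fe.
    apply: NNPP => /Decidable.not_or[/eqP f0 /eqP fe']; apply: no_sub; exists f.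
    by rewrite /proper_sub ff fe !eqxx f0 fe'.
  exists (fun e => xchoose (ex_sub e)) => e ee e0.
  by apply: (implyP (xchooseP (ex_sub e))); rewrite ee eqxx e0.
pose f k := iter k next 1.
have f_idem k : f k * f k = f k /\ f k != 0.
  elim: k => [|k [ff f0]]; first by rewrite mulr1 oner_neq0.
  by have /and4P[/eqP ? _ ? _] := next_sub _ ff f0.
have f_sub k : f k.+1 * f k = f k.+1 /\ f k.+1 != f k.
  by have [ff f0] := f_idem k; have /and4P[_ /eqP ? _ ?] := next_sub _ ff f0.
pose I k x := exists z, x = (1 - f k) * z.
have [K IK] : exists K, forall x, I K.+1 x -> I K x.
  apply: noetherian_acc => // [k|k _ [z ->]]; first exact: principal_is_ideal.
  exists ((1 - f k) * z); rewrite mulrA; congr (_ * _).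
  by rewrite mulrBl mul1r mulrBr mulr1 (f_sub k).1 subrr subr0.
have [[z fK] [fKK _]] := (IK _ (ex_intro _ 1 (esym (mulr1 _))), f_idem K).
have := congr1 (GRing.mul (f K)) fK.
rewrite mulrBr mulr1 mulrC (f_sub K).1 mulrA mulrBr mulr1 fKK subrr mul0r.
by move/eqP; rewrite subr_eq0 eq_sym; apply/negP; case: (f_sub K).
Qed.

Section FactorField.
Local Open Scope quotient_scope.
Variables (L : comNzRingType) (e : L).
Hypotheses (regL : von_neumann_regular L) (e_prim : primitive_idem e).

Definition ann_pred : {pred L} := fun x => x * e == 0.

Lemma ann_pred_closed : idealr_closed ann_pred.
Proof.
case: e_prim => _ e0 _; split; rewrite ?unfold_in /ann_pred /= ?mul0r ?mul1r //.
move=> b u v /eqP ue /eqP ve; apply/eqP.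
by rewrite mulrDl -mulrA ue ve mulr0 addr0.
Qed.

HB.instance Definition _ := isIdealr.Build L ann_pred ann_pred_closed.

Definition factor := {ideal_quot ann_pred}.
HB.instance Definition _ := GRing.ComNzRing.on factor.

Lemma pi_factorE x y : \pi_factor x = \pi_factor y <-> x * e = y * e.
Proof.
split=> [/eqP|xe_ye]; last by apply/eqP; rewrite -Quotient.idealrBE unfold_in /ann_pred mulrBl xe_ye subrr.
by rewrite -Quotient.idealrBE unfold_in /ann_pred mulrBl subr_eq0 => /eqP.
Qed.

(* [epsilon] gives an arbitrary value at [0], where the field axioms demand [0]. *)
Definition factor_inv (q : factor) : factor :=
  if q == 0 then 0 else \pi_factor (epsilon (inhabits 0) (fun y => repr q * e * y = e)).

Lemma factor_mulVf (q : factor) : q != 0 -> factor_inv q * q = 1.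
Proof.
move=> q0; rewrite /factor_inv (negPf q0).
have qe : repr q * e <> 0.
  move=> qe0; move/eqP: q0; apply; rewrite -[q]reprK.
  by rewrite -(rmorph0 (\pi_factor : {rmorphism L -> factor})); apply/pi_factorE; rewrite mul0r.
have [/qe //|inv_q] := regular_primitive_idem_unit regL e_prim (repr q).
have {inv_q}/(epsilon_spec (inhabits 0)) := inv_q.
set y := epsilon _ _ => qey.
rewrite -[q in _ * q]reprK -(rmorphM (\pi_factor : {rmorphism L -> factor})).
rewrite -(rmorph1 (\pi_factor : {rmorphism L -> factor})); apply/pi_factorE.
by rewrite mul1r [y * _]mulrC mulrAC qey.
Qed.

Lemma factor_inv0 : factor_inv 0 = 0.
Proof. by rewrite /factor_inv eqxx. Qed.

HB.instance Definition _ := GRing.ComNzRing_isField.Build factor factor_mulVf factor_inv0.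

Definition factor_field : fieldType := factor.
Definition pi_factor : {rmorphism L -> factor_field} := \pi_factor.

Lemma pi_factor_eq x y : pi_factor x = pi_factor y <-> x * e = y * e.
Proof. exact: pi_factorE. Qed.

Lemma pi_factor_repr (q : factor_field) : pi_factor (repr (q : factor)) = q.
Proof. exact: reprK. Qed.

Lemma repr_pi_factorM y : repr (pi_factor y : factor) * e = y * e.
Proof. by apply/pi_factor_eq; rewrite pi_factor_repr. Qed.

End FactorField.

Section RingAction.
Variables (A : zmodType) (L : comNzRingType) (act : A -> L -> L).
Hypothesis act_ring : is_ring_action act.

Lemma actD a x y : act a (x + y) = act a x + act a y.
Proof. by case: act_ring. Qed.
Lemma actM a x y : act a (x * y) = act a x * act a y.
Proof. by case: act_ring. Qed.
Lemma act1 a : act a 1 = 1.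
Proof. by case: act_ring. Qed.
Lemma act0_id : act 0 =1 id.
Proof. by case: act_ring. Qed.
Lemma actA a b x : act (a + b) x = act a (act b x).
Proof. by case: act_ring. Qed.

Lemma act0 a : act a 0 = 0.
Proof. by apply: (addrI (act a 0)); rewrite -actD !addr0. Qed.
Lemma actK a : cancel (act a) (act (- a)).
Proof. by move=> x; rewrite -actA addNr act0_id. Qed.
Lemma actKV a : cancel (act (- a)) (act a).
Proof. by move=> x; rewrite -actA subrr act0_id. Qed.

Lemma act_sum a I (r : seq I) (P : pred I) (F : I -> L) :
  act a (\sum_(i <- r | P i) F i) = \sum_(i <- r | P i) act a (F i).
Proof. exact: (big_morph (act a) (actD a) (act0 a)). Qed.
Lemma act_prod a I (r : seq I) (P : pred I) (F : I -> L) :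
  act a (\prod_(i <- r | P i) F i) = \prod_(i <- r | P i) act a (F i).
Proof. exact: (big_morph (act a) (actM a) (act1 a)). Qed.
Lemma actX a x k : act a (x ^+ k) = act a x ^+ k.
Proof. by elim: k => [|k IHk]; rewrite ?act1 // !exprS actM IHk. Qed.

Lemma act_primitive_idem a e : primitive_idem e -> primitive_idem (act a e).
Proof.
case=> ee e0 e_min; split; first by rewrite -actM ee.
  by apply: contra_neq e0 => ae0; rewrite -(actK a e) ae0 act0.
move=> f ff fe; have := e_min (act (- a) f).
rewrite -actM ff -[e in _ * e](actK a) -actM fe.
by case=> // [f0|fe']; [left|right]; rewrite -(actKV a f) ?f0 ?fe' ?act0.
Qed.

Lemma act_simple_orbit_generates e : act_simple act -> e != 0 ->
  exists ps : seq (L * A), 1 = \sum_(p <- ps) p.1 * act p.2 e.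
Proof.
move=> [_ simpleL] e0; pose J x := exists ps : seq (L * A), x = \sum_(p <- ps) p.1 * act p.2 e.
have act_idealJ : is_act_ideal act J.
  split; first split.
  - by exists [::]; rewrite big_nil.
  - by move=> _ _ [p ->] [q ->]; exists (p ++ q); rewrite big_cat.
  - move=> b _ [p ->]; exists [seq (b * q.1, q.2) | q <- p].
    by rewrite big_map mulr_sumr; apply: eq_bigr => q _; rewrite mulrA.
  - move=> b _ [p ->]; exists [seq (act b q.1, b + q.2) | q <- p].
    by rewrite big_map act_sum; apply: eq_bigr => q _; rewrite actM actA.
case: (simpleL J act_idealJ) => [J0|]; last exact.
by case/eqP: e0; apply/J0; exists [:: (1, 0)]; rewrite big_seq1 mul1r act0_id.
Qed.

End RingAction.

Lemma ring_action_restrict (G : zmodType) (L : comNzRingType) (act : (int * G)%type -> L -> L) :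
  is_ring_action act -> is_ring_action (fun g : G => act (0%:Z, g)).
Proof.
move=> act_ring; split=> [a|a|a|x|a b x]; try exact: (actD act_ring); try exact: (actM act_ring).
- exact: (act1 act_ring).
- exact: (act0_id act_ring).
- exact: (actA act_ring (0%:Z, a) (0%:Z, b)).
Qed.

Section Transversal.
Variables (G : finZmodType) (H : {set G}).

Definition coset_transversal (W : {set G}) := forall t,
  (exists2 h, h \in H & t + h \in W) /\
  {in H &, forall h h', t + h \in W -> t + h' \in W -> h = h'}.

Lemma transversal_shift W nu :
  coset_transversal W -> coset_transversal [set t | nu + t \in W].
Proof.
move=> HW t; have [[h Hh hW] h_uniq] := HW (nu + t).
split=> [|h' h'' Hh' Hh'']; first by exists h; rewrite // inE addrA.
by rewrite !inE !addrA; apply: h_uniq.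
Qed.

Hypothesis H_zmod : zmod_closed H.

Let memH0 : 0 \in H. Proof. by case: H_zmod. Qed.
Let memHB : {in H &, forall x y, x - y \in H}. Proof. by case: H_zmod. Qed.

(* [pick] only depends on the coset [t + H], not on [t]. *)
Definition coset_rep (t : G) : G := odflt 0 [pick x | x - t \in H].

Lemma coset_repP t : coset_rep t - t \in H.
Proof.
rewrite /coset_rep; case: pickP => [x //|no_rep].
by have := no_rep t; rewrite subrr memH0.
Qed.

Lemma coset_rep_eq t t' : t' - t \in H -> coset_rep t' = coset_rep t.
Proof.
move=> Htt'; rewrite /coset_rep; congr odflt; apply: eq_pick => x /=.
apply/idP/idP => Hx.
  have -> : x - t = (x - t') - - (t' - t) by rewrite opprK addrA subrK.
  by rewrite memHB // -sub0r memHB.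
have -> : x - t' = (x - t) - (t' - t) by rewrite opprB addrA subrK.
exact: memHB.
Qed.

Lemma transversal_exists : exists W, coset_transversal W.
Proof.
exists [set x | coset_rep x == x] => t; split.
  exists (coset_rep t - t); first exact: coset_repP.
  by rewrite addrC subrK inE (coset_rep_eq (coset_repP t)).
move=> h h' Hh Hh'; rewrite !inE => /eqP th /eqP th'; apply: (addrI t).
by rewrite -th -th' !(@coset_rep_eq t) // addrC addKr.
Qed.

End Transversal.

Section FreeAction.
Variables (G : finZmodType) (L C : comNzRingType).
Variables (act : G -> L -> L) (actC : G -> C -> C) (iota : C -> L).
Hypotheses (act_ring : is_ring_action act) (actC_ring : is_ring_action actC).
Hypotheses (iotaD : forall x y, iota (x + y) = iota x + iota y)
  (iotaM : forall x y, iota (x * y) = iota x * iota y) (iota1 : iota 1 = 1)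
  (iota_act : forall mu c, iota (actC mu c) = act mu (iota c)).
Hypothesis closedC : act_closed actC.

Lemma closed_zero n (I : dpoly G C n -> Prop) :
  is_act_ideal (@dpoly_act G C actC n) I -> ~ I 1 -> exists a, zero_set actC I a.
Proof.
move=> act_idealI I1; apply: NNPP => no_zero; apply: I1.
have [k] : radical I 1 by apply/(closedC act_idealI) => a Za; case: no_zero; exists a.
by rewrite expr1n.
Qed.

Definition indicator (W : {set G}) : 'I_#|{: 'I_1 * G}| -> C :=
  fun j => ((enum_val j).2 \in W)%:R.

Definition var (t : G) : dpoly G C 1 := 'X_(dvar (ord0, t)).

Lemma meval_var_indicator W t : (var t).@[indicator W] = (t \in W)%:R.
Proof. by rewrite /var mevalXU /indicator /dvar enum_rankK. Qed.

Lemma dpoly_act_indicator W nu p :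
  (dpoly_act actC nu p).@[indicator W] = actC nu p.@[indicator [set t | nu + t \in W]].
Proof.
rewrite /dpoly_act /mmap rmorph_sum mevalE (act_sum actC_ring).
apply: eq_bigr => m _; rewrite /= mevalM mevalC (actM actC_ring) /mmap1.
rewrite rmorph_prod (act_prod actC_ring); congr (_ * _); apply: eq_bigr => j _.
rewrite rmorphXn /= mevalXU (actX actC_ring) /indicator /dvar enum_rankK /= inE.
by case: (_ \in W); rewrite ?(act1 actC_ring) ?(act0 actC_ring).
Qed.

Definition transversal_ideal (H : {set G}) (p : dpoly G C 1) :=
  forall W, coset_transversal H W -> p.@[indicator W] = 0.

Lemma transversal_ideal_act H : is_act_ideal (@dpoly_act G C actC 1) (transversal_ideal H).
Proof.
split; first split.
- by move=> W _; rewrite meval0.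
- by move=> p q Ip Iq W HW; rewrite mevalD Ip // Iq // addr0.
- by move=> a p Ip W HW; rewrite mevalM Ip // mulr0.
- move=> nu p Ip W HW; rewrite dpoly_act_indicator Ip ?(act0 actC_ring) //.
  exact: transversal_shift.
Qed.

Lemma transversal_ideal_zero (H : {set G}) a : zmod_closed H -> zero_set actC (transversal_ideal H) a ->
  [/\ a ord0 * a ord0 = a ord0,
      forall g, g \in H -> g != 0 -> a ord0 * actC g (a ord0) = 0 &
      \sum_(h in H) actC h (a ord0) = 1].
Proof.
move=> [H0 _] Za; pose v (j : 'I_#|{: 'I_1 * G}|) := actC (enum_val j).2 (a (enum_val j).1).
have ev t : (var t).@[v] = actC t (a ord0) by rewrite /var mevalXU /v /dvar enum_rankK.
have ev0 : (var 0).@[v] = a ord0 by rewrite ev (act0_id actC_ring).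
have eval0 p : transversal_ideal H p -> p.@[v] = 0 by move/Za.
split.
- apply/eqP; rewrite -subr_eq0 -ev0 -mevalM -mevalB.
  apply/eqP/eval0 => W _; rewrite mevalB mevalM meval_var_indicator.
  by case: (0 \in W); rewrite ?mulr1 ?mulr0 subrr.
- move=> g Hg g0; rewrite -ev -{1}ev0 -mevalM.
  apply: eval0 => W HW; rewrite mevalM !meval_var_indicator.
  have [_ uniq0] := HW 0.
  case: (boolP (0 \in W)) => W0; last by rewrite mulr0n mul0r.
  case: (boolP (g \in W)) => gW; last by rewrite mulr0n mulr0.
  by case/negP: g0; apply/eqP; symmetry; apply: uniq0; rewrite ?add0r.
- apply/eqP; rewrite -subr_eq0; under eq_bigr do rewrite -ev.
  rewrite -rmorph_sum -(meval1 v) -mevalB; apply/eqP/eval0 => W HW.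
  have [[h0 Hh0 h0W] uniq0] := HW 0; rewrite add0r in h0W.
  rewrite mevalB meval1 rmorph_sum (bigD1 h0) //= meval_var_indicator h0W big1 ?addr0 ?subrr //.
  move=> h /andP[Hh hh0]; rewrite meval_var_indicator; case: (boolP (h \in W)) => // hW.
  by case/negP: hh0; apply/eqP; apply: uniq0; rewrite ?add0r.
Qed.

Definition stab (u : L) : {set G} := [set g | act g u == u].

Lemma stab_zmod_closed u : zmod_closed (stab u).
Proof.
split; first by rewrite inE (act0_id act_ring).
move=> x y; rewrite !inE => /eqP xu /eqP yu.
by rewrite (actA act_ring) -{1}yu (actK act_ring) xu.
Qed.

Lemma stab_partition_mul_neq0 u b g : primitive_idem u -> b * b = b ->
  \sum_(h in stab u) act h b = 1 -> g \in stab u -> b * act g b != 0.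
Proof.
move=> u_prim bb sum_b; rewrite inE => /eqP gu; apply/negP => /eqP bgb0.
have [uu /eqP u0 _] := u_prim; apply: u0.
case: (primitive_idemM u_prim bb) => [bu0|bu].
  rewrite -[u]mul1r -sum_b mulr_suml big1 // => h.
  by rewrite inE => /eqP hu; rewrite -[u in _ * u]hu -(actM act_ring) bu0 (act0 act_ring).
have : b * u * act g (b * u) = 0 by rewrite (actM act_ring) gu mulrACA bgb0 mul0r.
by rewrite bu gu uu.
Qed.

Let iota0 : iota 0 = 0.
Proof. by apply: (addrI (iota 0)); rewrite -iotaD !addr0. Qed.

Lemma primitive_idem_free u g : primitive_idem u -> act g u = u -> g = 0.
Proof.
move=> u_prim gu; apply: NNPP => /eqP g0.
have stab_zmod := stab_zmod_closed u.
have [a Za] : exists a, zero_set actC (transversal_ideal (stab u)) a.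
  apply: closed_zero (transversal_ideal_act _) _.
  have [W HW] := transversal_exists stab_zmod.
  by move/(_ W HW); rewrite meval1; apply/eqP/oner_neq0.
have [a_idem a_orth a_sum] := transversal_ideal_zero stab_zmod Za.
have g_stab : g \in stab u by rewrite inE gu.
have b_idem : iota (a ord0) * iota (a ord0) = iota (a ord0) by rewrite -iotaM a_idem.
have b_sum : \sum_(h in stab u) act h (iota (a ord0)) = 1.
  rewrite -iota1 -a_sum (big_morph iota iotaD iota0).
  by apply: eq_bigr => h _; rewrite iota_act.
have /negP[] := stab_partition_mul_neq0 u_prim b_idem b_sum g_stab.
by rewrite -iota_act -iotaM a_orth // iota0.
Qed.

End FreeAction.

Section OrbitDecomposition.
Variables (G : finZmodType) (L : comNzRingType) (act : (int * G)%type -> L -> L).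
Hypothesis act_ring : is_ring_action act.
Variables (e : L) (ps : seq (L * (int * G))).
Hypotheses (e_prim : primitive_idem e) (ps_gen : 1 = \sum_(p <- ps) p.1 * act p.2 e).
Hypothesis free : forall u g, primitive_idem u -> act (0%:Z, g) u = u -> g = 0.

Local Notation shift t := (act (0%:Z, t)).

Let shiftA s t x : shift s (shift t x) = shift (s + t) x.
Proof. by rewrite -(actA act_ring). Qed.

Definition in_orbit (v : L) := exists s, v = act s e.

Let orbit_prim v : in_orbit v -> primitive_idem v.
Proof. by case=> s ->; apply: act_primitive_idem. Qed.

Let orbit_shift t v : in_orbit v -> in_orbit (shift t v).
Proof. by case=> s ->; exists ((0%:Z, t) + s); rewrite (actA act_ring). Qed.

Definition orbit_seq := [seq act p.2 e | p <- ps].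

(* Distinct primitive idempotents are orthogonal, so an orbit element missing
   from [orbit_seq] would be killed by [1]. *)
Lemma orbit_mem v : in_orbit v -> v \in orbit_seq.
Proof.
move=> orb_v; apply: NNPP => v_notin; have [vv /eqP v0 _] := orbit_prim orb_v; apply: v0.
rewrite -[v]mul1r ps_gen mulr_suml big_seq big1 // => p p_in.
have [|ev] := primitive_idem_orth (act_primitive_idem act_ring p.2 e_prim) (orbit_prim orb_v).
  by rewrite -mulrA => ->; rewrite mulr0.
by case: v_notin; rewrite -ev; apply: map_f.
Qed.

Definition orbit_rep (w : L) : L :=
  nth 0 orbit_seq (find (fun v => [exists t, v == shift t w]) orbit_seq).

Lemma orbit_repP w : in_orbit w -> exists t, orbit_rep w = shift t w.
Proof.
move=> orb_w; have has_rep : has (fun v => [exists t, v == shift t w]) orbit_seq.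
  apply/hasP; exists w; first exact: orbit_mem.
  by apply/existsP; exists 0; rewrite (act0_id act_ring).
by have /existsP[t /eqP rep_w] := nth_find 0 has_rep; exists t.
Qed.

Lemma orbit_rep_shift w t : orbit_rep (shift t w) = orbit_rep w.
Proof.
rewrite /orbit_rep; congr nth; apply: eq_find => v.
apply/existsP/existsP => -[x /eqP ->]; first by exists (x + t); rewrite shiftA.
by exists (x - t); rewrite shiftA subrK.
Qed.

Definition reps := undup [seq orbit_rep v | v <- orbit_seq].
Definition rep (i : 'I_(size reps)) := nth 0 reps i.

Lemma rep_in i : rep i \in [seq orbit_rep v | v <- orbit_seq].
Proof. by rewrite -mem_undup mem_nth. Qed.

Lemma rep_orbit i : exists s, rep i = act s e.
Proof.
have /mapP[w /mapP[p _ ->] ->] := rep_in i.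
have [t ->] := orbit_repP (ex_intro _ p.2 erefl).
by apply: orbit_shift; exists p.2.
Qed.

Lemma orbit_rep_rep i : orbit_rep (rep i) = rep i.
Proof.
have /mapP[w /mapP[p _ w_def] rep_def] := rep_in i.
have [t rep_w] := orbit_repP (ex_intro _ p.2 w_def).
by rewrite {1}rep_def rep_w orbit_rep_shift -rep_def.
Qed.

Lemma orbit_rep_in v : in_orbit v -> exists i, orbit_rep v = rep i.
Proof.
move=> orb_v; have rep_v : orbit_rep v \in reps by rewrite mem_undup map_f ?orbit_mem.
by exists (Ordinal (etrans (index_mem _ _) rep_v)); rewrite /rep nth_index.
Qed.

Lemma rep_shift_inj i j t t' : shift t (rep i) = shift t' (rep j) -> i = j /\ t = t'.
Proof.
move=> eq_shift; have rep_ij : shift (- t' + t) (rep i) = rep j.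
  by rewrite -shiftA eq_shift shiftA addNr (act0_id act_ring).
have ij : i = j.
  apply/val_inj/eqP; rewrite -(nth_uniq 0 (ltn_ord i) (ltn_ord j) (undup_uniq _)).
  by rewrite -/(rep i) -/(rep j) -[rep j]orbit_rep_rep -rep_ij orbit_rep_shift orbit_rep_rep.
split=> //; apply/eqP; rewrite -subr_eq0 addrC.
have [s rep_s] := rep_orbit i.
by apply/eqP/(free (act_primitive_idem act_ring s e_prim)); rewrite -rep_s rep_ij ij.
Qed.

Lemma rep_shift_orth i j t t' :
  (i, t) != (j, t') -> shift t (rep i) * shift t' (rep j) = 0.
Proof.
move=> ne; have orb k t'' : in_orbit (shift t'' (rep k)).
  by apply: orbit_shift; have [s ->] := rep_orbit k; exists s.
case: (primitive_idem_orth (orbit_prim (orb i t)) (orbit_prim (orb j t'))) => // /rep_shift_inj.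
by case=> ij tt'; rewrite ij tt' eqxx in ne.
Qed.

Lemma sum_rep_shift : \sum_i \sum_t shift t (rep i) = 1.
Proof.
have sum_mul v : in_orbit v -> (\sum_i \sum_t shift t (rep i)) * v = v.
  move=> orb_v; have [i rep_v] := orbit_rep_in orb_v; have [t rep_vt] := orbit_repP orb_v.
  have v_def : v = shift (- t) (rep i) by rewrite -rep_v rep_vt shiftA addNr (act0_id act_ring).
  rewrite pair_big mulr_suml (bigD1 (i, - t)) //= -v_def.
  rewrite big1 ?addr0; first by have [] := orbit_prim orb_v.
  by case=> j t' /= ne; rewrite v_def rep_shift_orth // eq_sym.
rewrite -[LHS]mulr1 ps_gen mulr_sumr.
by apply: eq_bigr => p _; rewrite mulrCA sum_mul //; exists p.2.
Qed.

Lemma size_reps_gt0 : (0 < size reps)%N.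
Proof.
have [i _] := orbit_rep_in (ex_intro _ 0 (esym (act0_id act_ring e))).
exact: leq_ltn_trans (ltn_ord i).
Qed.

Lemma orbit_decomposition : exists n (s : 'I_n -> int * G), [/\ (0 < n)%N,
  forall i j t t', (i, t) != (j, t') ->
    shift t (act (s i) e) * shift t' (act (s j) e) = 0 &
  \sum_i \sum_t shift t (act (s i) e) = 1].
Proof.
have [s rep_s] := fin_all_exists rep_orbit.
exists (size reps), s; split; first exact: size_reps_gt0.
  by move=> i j t t'; rewrite -!rep_s; apply: rep_shift_orth.
by under eq_bigr do under eq_bigr do rewrite -rep_s; apply: sum_rep_shift.
Qed.

End OrbitDecomposition.

Section ProductDecomposition.
Variables (G : finZmodType) (L : comNzRingType) (act : (int * G)%type -> L -> L).
Hypothesis act_ring : is_ring_action act.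
Variables (e : L) (n : nat) (s : 'I_n -> int * G).
Hypotheses (regL : von_neumann_regular L) (e_prim : primitive_idem e).

Local Notation shift t := (act (0%:Z, t)).
Local Notation v i t := (shift t (act (s i) e)).
Local Notation F := (factor_field regL e_prim).
Local Notation pi := (pi_factor regL e_prim).

Hypotheses (v_orth : forall i j t t', (i, t) != (j, t') -> v i t * v j t' = 0)
  (v_sum : \sum_i \sum_t v i t = 1).

(* [x] is the family of its restrictions to the corners [L v_(i,t)], each
   transported back to [L e]. *)
Definition coord (x : L) (i : 'I_n) (t : G) : F := pi (act (- s i) (shift (- t) x)).

Definition glue (f : 'I_n -> G -> F) : L :=
  \sum_i \sum_t shift t (act (s i) (repr (f i t : factor e_prim) * e)).

Let shiftK t : cancel (shift t) (shift (- t)).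
Proof. exact: (actK act_ring (0%:Z, t)). Qed.

Let back_v i t : act (- s i) (shift (- t) (v i t)) = e.
Proof. by rewrite shiftK (actK act_ring). Qed.

Lemma coordK : cancel coord glue.
Proof.
move=> x; rewrite /glue -[RHS]mulr1 -v_sum mulr_sumr; apply: eq_bigr => i _.
rewrite mulr_sumr; apply: eq_bigr => t _.
rewrite repr_pi_factorM !(actM act_ring) (actKV act_ring).
by rewrite -(actA act_ring) subrr (act0_id act_ring).
Qed.

Lemma glueK : cancel glue coord.
Proof.
move=> f; apply: functional_extensionality => i; apply: functional_extensionality => t.
have off_diag j t' : (j, t') != (i, t) ->
    pi (act (- s i) (shift (- t) (shift t' (act (s j) (repr (f j t' : factor e_prim) * e))))) = 0.
  move=> ne; rewrite -(rmorph0 pi); apply/pi_factor_eq; rewrite mul0r.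
  rewrite -[e in _ * e](back_v i t) -!(actM act_ring).
  have -> : shift t' (act (s j) (repr (f j t' : factor e_prim) * e)) * v i t = 0.
    by rewrite !(actM act_ring) -mulrA v_orth ?mulr0.
  by rewrite !(act0 act_ring).
rewrite /coord /glue !(act_sum act_ring) rmorph_sum (bigD1 i) //= [X in _ + X]big1 => [|j ji]; last first.
  rewrite !(act_sum act_ring) rmorph_sum big1 // => t' _.
  by apply: off_diag; rewrite xpair_eqE (negPf ji).
rewrite addr0 !(act_sum act_ring) rmorph_sum (bigD1 t) //= [X in _ + X]big1 => [|t' t't]; last first.
  by apply: off_diag; rewrite xpair_eqE (negPf t't) andbF.
rewrite addr0 shiftK (actK act_ring) -[RHS]pi_factor_repr; apply/pi_factor_eq.
by have [ee _ _] := e_prim; rewrite -mulrA ee.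
Qed.

Lemma coord1 i t : coord 1 i t = 1.
Proof. by rewrite /coord !(act1 act_ring) rmorph1. Qed.

Lemma coordD x y i t : coord (x + y) i t = coord x i t + coord y i t.
Proof. by rewrite /coord !(actD act_ring) rmorphD. Qed.

Lemma coordM x y i t : coord (x * y) i t = coord x i t * coord y i t.
Proof. by rewrite /coord !(actM act_ring) rmorphM. Qed.

Lemma coord_shift mu x i t : coord (shift mu x) i t = coord x i (t - mu).
Proof. by rewrite /coord -(actA (ring_action_restrict act_ring)) opprB addrC. Qed.

End ProductDecomposition.

Theorem proposition8 (G : finZmodType) (L : comNzRingType)
  (act : (int * G)%type -> L -> L) :
  is_ring_action act ->
  act_pseudofield act ->
  noetherian_ring L ->
  invariants_closed_pseudofield act ->
  exists (F : fieldType) (n : nat), (0 < n)%N /\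
    exists phi : L -> 'I_n -> G -> F,
      [/\ bijective phi,
          forall i tau, phi 1 i tau = 1,
          forall x y i tau, phi (x + y) i tau = phi x i tau + phi y i tau,
          forall x y i tau, phi (x * y) i tau = phi x i tau * phi y i tau &
          forall mu x i tau, phi (act (0, mu) x) i tau = phi x i (tau - mu)].
Proof.
move=> act_ring [flatL simpleL] noethL [C [actC [iota [actC_ring [iotaD iotaM iota1 _] _ iota_act [_ closedC]]]]].
have regL := absolutely_flat_regular flatL.
have [e e_prim] := noetherian_primitive_idem noethL.
have [_ e0 _] := e_prim.
have [ps ps_gen] := act_simple_orbit_generates act_ring simpleL e0.
have free u g : primitive_idem u -> act (0%:Z, g) u = u -> g = 0.
  exact: (primitive_idem_free (ring_action_restrict act_ring) actC_ring iotaD iotaM iota1 iota_act closedC).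
have [n [s [n_gt0 v_orth v_sum]]] := orbit_decomposition act_ring e_prim ps_gen free.
exists (factor_field regL e_prim), n; split=> //; exists (coord act s regL e_prim); split.
- exists (glue act s (e_prim := e_prim)).
    by have := coordK act_ring regL e_prim v_sum.
  by have := glueK act_ring (regL := regL) v_orth.
- by move=> i t; rewrite coord1.
- by move=> x y i t; rewrite coordD.
- by move=> x y i t; rewrite coordM.
- by move=> mu x i t; rewrite coord_shift.
Qed.
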